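(* Let $G$ be a graph, $X\subseteq V(G)$ with $F:=G-X$ a pseudoforest, and $k$ an integer. Suppose there are distinct $u,v,w\in X$ such that $\{u,v,w\}$ is independent in $G$, $\mathrm{Conf}_F(\{u,v,w\}) \ge |X|$, and there is no anchor triangle $P$ with $N_G(V(P))=\{u,v,w\}$. Let $G'$ be obtained from $G$ by adding three new vertices $p_u,p_v,p_w$ and the edges $p_up_v, p_up_w, p_vp_w, p_uu, p_vv, p_ww$, and let $k' := k+1$. Then $G$ has an independent set of size at least $k$ if and only if $G'$ has an independent set of size at least $k'$.
   Context: All graphs are finite, simple and undirected; a pseudoforest is a graph each of whose connected components contains at most one cycle. $\alpha(H)$ is the independence number of $H$. For a subgraph $F'\subseteq F$ and $X'\subseteq X$, the number of conflicts is $\mathrm{Conf}_{F'}(X') := \alpha(F') - \alpha(F' - N_G(X'))$, where $N_G(X')$ is the set of vertices outside $X'$ adjacent to some vertex of $X'$. An anchor triangle is a connected component $P$ of $F=G-X$ with $V(P)=\{p_1,p_2,p_3\}$ such that there are vertices $x_1,x_2,x_3\in X$ with $N_G(p_1)=\{p_2,p_3,x_1\}$, $N_G(p_2)=\{p_1,p_3,x_2\}$, $N_G(p_3)=\{p_1,p_2,x_3\}$. *)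

(* Graphs: a simple graph on a finType T is a symmetric,
   irreflexive relation e : rel T (assumed as hypotheses in the theorem). *)
From mathcomp Require Import all_boot all_order all_algebra.
Set Implicit Arguments. Unset Strict Implicit. Unset Printing Implicit Defensive.

Section Defs.
Variable T : finType.
Variable e : rel T.

Definition indep (S : {set T}) : bool :=
  [forall x in S, forall y in S, ~~ e x y].

Definition alpha (A : {set T}) : nat :=
  \big[maxn/0%N]_(S : {set T} | (S \subset A) && indep S) #|S|.

Definition NG (Y : {set T}) : {set T} :=
  [set y | (y \notin Y) && [exists x in Y, e x y]].

Definition induced (A : {set T}) : rel T :=
  fun x y => [&& x \in A, y \in A & e x y].

Definition cycle_in (A : {set T}) (c : seq T) : bool :=
  [&& uniq c, 2 < size c, all (fun x => x \in A) c & cycle e c].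

Definition cyc_edge (c : seq T) (x y : T) : bool :=
  ((x \in c) && (next c x == y)) || ((y \in c) && (next c y == x)).

(* G[A] is a pseudoforest: any two cycles lying in the same connected
   component of G[A] are the same cycle (same edge set), i.e. each
   component contains at most one cycle. *)
Definition pseudoforest (A : {set T}) : Prop :=
  forall c1 c2 : seq T, cycle_in A c1 -> cycle_in A c2 ->
    (exists x y, [/\ x \in c1, y \in c2 & connect (induced A) x y]) ->
    forall x y, cyc_edge c1 x y = cyc_edge c2 x y.

Definition Conf (X Y : {set T}) : nat :=
  alpha (~: X) - alpha (~: X :\: NG Y).

Definition anchor_triangle (X P : {set T}) : Prop :=
  exists p1 p2 p3 x1 x2 x3 : T,
    [/\ P = [set p1; p2; p3], [&& p1 != p2, p1 != p3 & p2 != p3],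
        p1 \notin X /\ P = [set y | connect (induced (~: X)) p1 y],
        [&& x1 \in X, x2 \in X & x3 \in X] &
        [/\ [set y | e p1 y] = [set p2; p3; x1],
            [set y | e p2 y] = [set p1; p3; x2] &
            [set y | e p3 y] = [set p1; p2; x3]]].

End Defs.

(* The graph G' obtained from G by adding p_u, p_v, p_w (= inr 0, inr 1, inr 2),
   the triangle on them, and edges p_u u, p_v v, p_w w. *)
Definition attach (T : finType) (u v w : T) (i : 'I_3) : T :=
  nth u [:: u; v; w] i.

Definition ext_rel (T : finType) (e : rel T) (u v w : T) : rel (T + 'I_3) :=
  fun a b =>
    match a, b with
    | inl x, inl y => e x y
    | inr i, inr j => i != j
    | inl x, inr i => x == attach u v w i
    | inr i, inl x => x == attach u v w i
    end.

(* Let S be an independent set of G.  If one of u, v, w is missing from S,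
   the new vertex attached to it extends S.  Otherwise S :\: X avoids
   N_G({u,v,w}), so |S| <= |X| + alpha(F - N_G({u,v,w})) <= alpha(F) by the
   bound on Conf_F({u,v,w}); a maximum independent set of F misses u and is
   extended by p_u.  Conversely, an independent set of G' meets the new
   triangle in at most one vertex. *)
From mathcomp Require Import all_boot all_order all_algebra zify.
Import GRing.Theory Num.Theory.
Set Implicit Arguments. Unset Strict Implicit.

Section IndependentSets.
Variables (T : finType) (e : rel T).

Lemma indep_subset (A B : {set T}) : A \subset B -> indep e B -> indep e A.
Proof.
move=> /subsetP sAB /forall_inP indB; apply/forall_inP => x Ax.
by apply/forall_inP => y Ay; move/forall_inP: (indB x (sAB x Ax)) => /(_ y (sAB y Ay)).
Qed.

Lemma card_le_alpha (A S : {set T}) :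
  S \subset A -> indep e S -> (#|S| <= alpha e A)%N.
Proof.
move=> sSA indS; rewrite /alpha.
apply: (@leq_bigmax_cond _ (fun S : {set T} => (S \subset A) && indep e S)
  (fun S : {set T} => #|S|)).
by rewrite sSA indS.
Qed.

Lemma alpha_attained (A : {set T}) :
  exists2 S : {set T}, (S \subset A) && indep e S & #|S| = alpha e A.
Proof.
have : (0 < #|[pred S : {set T} | (S \subset A) && indep e S]|)%N.
  apply/card_gt0P; exists set0; rewrite inE sub0set.
  by apply/forall_inP => x; rewrite inE.
move=> /(eq_bigmax_cond (fun S : {set T} => #|S|)) [S0 + max0].
by rewrite inE => S0A; exists S0; rewrite // /alpha -max0.
Qed.

Lemma alpha_subset (A B : {set T}) : A \subset B -> (alpha e A <= alpha e B)%N.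
Proof.
move=> sAB; have [S /andP [sSA indS] <-] := alpha_attained A.
exact: card_le_alpha (subset_trans sSA sAB) indS.
Qed.

Lemma indep_disjoint_NG (S Y : {set T}) :
  indep e S -> Y \subset S -> [disjoint S & NG e Y].
Proof.
move=> /forall_inP indS /subsetP sYS; apply/pred0P => y /=.
apply/negP => /andP [yS]; rewrite inE => /andP [_ /exists_inP [x Yx exy]].
by move/forall_inP: (indS x (sYS x Yx)) => /(_ y yS); rewrite exy.
Qed.

Lemma card_indep_le_alpha (X Y S : {set T}) :
  (#|X| <= Conf e X Y)%N -> indep e S -> Y \subset S ->
  (#|S| <= alpha e (~: X))%N.
Proof.
move=> XleConf indS sYS.
have SX : (#|S :&: X| <= #|X|)%N by rewrite subset_leq_card ?subsetIr.
have SnotX : (#|S :\: X| <= alpha e (~: X :\: NG e Y))%N.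
  apply: card_le_alpha; last exact: indep_subset (subsetDl S X) indS.
  apply/subsetP => y /setDP [yS yX].
  by rewrite in_setD in_setC yX (disjointFr (indep_disjoint_NG indS sYS) yS).
(* [alphaD] rules out truncation in the subtraction defining [Conf]. *)
have alphaD := alpha_subset (subsetDl (~: X) (NG e Y)).
by rewrite -(cardsID X S); move: XleConf; rewrite /Conf; lia.
Qed.

End IndependentSets.

Section Attachment.
Variables (T : finType) (e : rel T) (u v w : T).
Local Notation e' := (ext_rel e u v w).

Lemma card_ext_setU1 (S : {set T}) (i : 'I_3) :
  #|inr i |: (inl @: S)| = #|S|.+1.
Proof.
rewrite cardsU1 card_imset; last by move=> ? ? [].
by have -> : inr i \notin inl @: S by apply/imsetP => -[].
Qed.

Lemma indep_ext_setU1 (S : {set T}) (i : 'I_3) :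
  indep e S -> attach u v w i \notin S -> indep e' (inr i |: (inl @: S)).
Proof.
move=> /forall_inP indS iS.
have memE z : (z \in inr i |: (inl @: S)) =
              (if z is inl a then a \in S else z == inr i).
  case: z => [a|j]; rewrite !inE /=; first by rewrite mem_imset //; move=> ? ? [].
  by case: eqP => //= _; apply/imsetP => -[].
apply/forall_inP => x; rewrite memE => Sx; apply/forall_inP => y; rewrite memE.
case: x Sx => [a|j]; case: y => [b|l] /=.
- by move=> Sa Sb; move/forall_inP: (indS a Sa) => /(_ b Sb).
- by move=> Sa /eqP [->]; apply: contraNN iS => /eqP <-.
- by move=> /eqP [->] Sb; apply: contraNN iS => /eqP <-.
- by move=> /eqP [->] /eqP [->]; rewrite negbK.
Qed.

Lemma indep_ext_inl (S : {set (T + 'I_3)}) :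
  indep e' S -> indep e [set x | inl x \in S].
Proof.
move=> /forall_inP indS; apply/forall_inP => x; rewrite inE => Sx.
by apply/forall_inP => y; rewrite inE => Sy; move/forall_inP: (indS _ Sx) => /(_ _ Sy).
Qed.

Lemma card_indep_ext (S : {set (T + 'I_3)}) :
  indep e' S -> (#|S| <= #|[set x | inl x \in S]|.+1)%N.
Proof.
move=> /forall_inP indS.
set R := [set z in S | if z is inr _ then true else false].
have sS : S \subset inl @: [set x | inl x \in S] :|: R.
  apply/subsetP => -[a|j] Sz; rewrite !inE; last by rewrite Sz orbT.
  by rewrite mem_imset ?inE ?Sz //; move=> ? ? [].
have R1 : (#|R| <= 1)%N.
  rewrite leqNgt; apply/card_gt1P => -[[a|j] [[b|l] []]]; rewrite !inE ?andbF //.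
  rewrite !andbT => Sj Sl jl; move/forall_inP: (indS _ Sj) => /(_ _ Sl) /=.
  by rewrite negbK => /eqP jE; rewrite jE eqxx in jl.
apply: (leq_trans (subset_leq_card sS)); apply: (leq_trans (leq_card_setU _ _)).
rewrite card_imset; last by move=> ? ? [].
lia.
Qed.

Lemma attach_notin_or_subset (S : {set T}) :
  [set u; v; w] \subset S \/ exists i : 'I_3, attach u v w i \notin S.
Proof.
case: (boolP ([set u; v; w] \subset S)) => [uvwS|/subsetPn [x]]; first by left.
rewrite !inE => /orP [/orP [] | ] /eqP -> xS; right.
- by exists ord0.
- by exists (inord 1); rewrite /attach inordK.
- by exists (inord 2); rewrite /attach inordK.
Qed.

End Attachment.

Theorem lemma3 (T : finType) (e : rel T) (X : {set T}) (k : int) (u v w : T) :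
  symmetric e -> irreflexive e ->
  pseudoforest e (~: X) ->
  [&& u \in X, v \in X & w \in X] ->
  [&& u != v, u != w & v != w] ->
  indep e [set u; v; w] ->
  (#|X| <= Conf e X [set u; v; w])%N ->
  ~ (exists P : {set T}, anchor_triangle e X P /\ NG e P = [set u; v; w]) ->
  ((exists S : {set T}, indep e S /\ (k <= (#|S|)%:Z)%R) <->
   (exists S : {set (T + 'I_3)%type}, indep (ext_rel e u v w) S /\
      (k + 1 <= (#|S|)%:Z)%R)).
Proof.
move=> _ _ _ /and3P [uX _ _] _ _ XleConf _; split; last first.
  move=> [S' [indS' kS']]; exists [set x | inl x \in S'].
  by split; [exact: indep_ext_inl indS' | have := card_indep_ext indS'; lia].
move=> [S [indS kS]].
suff [S0 [i [indS0 iS0 SleS0]]] : exists S0 (i : 'I_3),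
    [/\ indep e S0, attach u v w i \notin S0 & (#|S| <= #|S0|)%N].
  exists (inr i |: (inl @: S0)); split; first exact: indep_ext_setU1.
  by rewrite card_ext_setU1; lia.
case: (attach_notin_or_subset u v w S) => [uvwS | [i iS]]; last by exists S, i.
have [S0 /andP [S0F indS0] cardS0] := alpha_attained e (~: X).
exists S0, ord0; split => //.
  by apply: contraL uX => /(subsetP S0F); rewrite inE.
by rewrite cardS0; exact: card_indep_le_alpha XleConf indS uvwS.
Qed.
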